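(* Let $r=2$, $F$ free on $x,y$, and let $c=[[x,y],[[x,y],y]]\in F_5$. Let $\phi$ be the endomorphism of $F$ with $x\mapsto xc$, $y\mapsto y$. Then $\phi$ is not an automorphism of $F$ (it extends to an element of $B_4$ not coming from $A_4$), although $\widetilde D\phi-$ has trace $\partial c/\partial x\in\varpi^4$ whose image in $\varpi^4/\varpi^5\cong\mathcal R_4$ lies in $\mathcal R_4^+$; i.e. $J=D\phi$ satisfies $J-\mathbb 1\in M_2(\varpi^4)$ and $\tau(\operatorname{tr}(J-\mathbb 1))\bmod \varpi^5\in\mathcal R_4^+$, yet $J$ is not invertible over $\mathbb ZF$.
   Context: $[u,v]=u^{-1}v^{-1}uv$; $F_1=F$, $F_{n+1}=[F_n,F]$. $A_n=\ker(\mathrm{Aut}(F)\to\mathrm{Aut}(F/F_{n+1}))$; $B_n$ is the kernel of $\mathrm{Aut}_{\mathrm{cont}}(\hat F)\to\mathrm{Aut}(\hat F/\hat F_{n+1})$ for the pronilpotent completion $\hat F$. Fox derivatives: additive maps $\partial/\partial x_j$ on $\mathbb ZF$ with $\partial x_j/\partial x_j=1$, $\partial x_l/\partial x_j=0$ ($l\ne j$), $\partial(uv)/\partial x_j=\frac{\partial u}{\partial x_j}o(v)+u\frac{\partial v}{\partial x_j}$, $o$ the augmentation, $\varpi=\ker o$. The Jacobian of an endomorphism is $D\phi=(\partial(x_i^\phi)/\partial x_j)_{i,j}$, $\widetilde D\phi=D\phi-\mathbb 1$. $\tau:\mathbb ZF\to\mathbb Z\langle\langle X,Y\rangle\rangle$,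 $x\mapsto1+X$, $y\mapsto1+Y$, identifies $\varpi^4/\varpi^5$ with the degree-4 part $\mathcal R_4$. $\mathcal R_4^+=\mathcal R_4(1-\gamma)$ where $\gamma$ cyclically rotates monomials, $(Z_1Z_2Z_3Z_4)^\gamma=Z_2Z_3Z_4Z_1$. *)

From HB Require Import structures.
From mathcomp Require Import all_boot all_order all_algebra.
Set Implicit Arguments. Unset Strict Implicit. Unset Printing Implicit Defensive.
Import Order.TTheory GRing.Theory Num.Theory.
Local Open Scope ring_scope.

Definition gen := bool.
Definition gx : gen := false.
Definition gy : gen := true.

(* a letter (g, e): e = false means g, e = true means g^-1 *)
Definition letter := (gen * bool)%type.
Definition word := seq letter.
Definition linv (l : letter) : letter := (l.1, ~~ l.2).

(* free reduction; two words represent the same element of F iff their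
   reductions coincide *)
Definition push (l : letter) (s : word) : word :=
  match s with
  | l' :: s' => if l' == linv l then s' else l :: s
  | [::] => [:: l]
  end.
Definition reduce (w : word) : word := foldr push [::] w.
Definition eqF (u v : word) : Prop := reduce u = reduce v.

Definition winv (w : word) : word := rev (map linv w).
Definition wx : word := [:: (gx, false)].
Definition wy : word := [:: (gy, false)].
Definition comm (u v : word) : word := winv u ++ winv v ++ u ++ v.

Definition ext (f : gen -> word) (w : word) : word :=
  flatten [seq (if l.2 then winv (f l.1) else f l.1) | l <- w].

Definition isAut (f : gen -> word) : Prop :=
  (forall u v, eqF (ext f u) (ext f v) -> eqF u v) /\
  (forall v, exists u, eqF (ext f u) v).

(* lower central series: F_1 = F, F_{n+1} = [F_n, F] (subgroup generated) *)
Inductive lcs : nat -> word -> Prop :=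
| lcs_one w : lcs 1 w
| lcs_comm n u v : lcs n u -> lcs n.+1 (comm u v)
| lcs_nil n : lcs n [::]
| lcs_mul n u v : lcs n u -> lcs n v -> lcs n (u ++ v)
| lcs_inv n u : lcs n u -> lcs n (winv u)
| lcs_eqF n u v : eqF u v -> lcs n u -> lcs n v.

(* integral group ring ZF: formal finite sums  sum_i z_i w_i *)
Definition ZF := seq (int * word).
Definition coef (a : ZF) (g : word) : int :=
  \sum_(p <- a | reduce p.2 == reduce g) p.1.
Definition eqZF (a b : ZF) : Prop := forall g, coef a g = coef b g.

Definition elt (w : word) : ZF := [:: (1, w)].
Definition zeroZF : ZF := [::].
Definition oneZF : ZF := elt [::].
Definition addZF (a b : ZF) : ZF := a ++ b.
Definition scaleZF (z : int) (a : ZF) : ZF := [seq (z * p.1, p.2) | p <- a].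
Definition oppZF (a : ZF) : ZF := scaleZF (-1) a.
Definition subZF (a b : ZF) : ZF := addZF a (oppZF b).
Definition mulZF (a b : ZF) : ZF :=
  [seq (p.1 * q.1, p.2 ++ q.2) | p <- a, q <- b].
Definition prodZF (s : seq ZF) : ZF := foldr mulZF oneZF s.
Definition sumZF (s : seq ZF) : ZF := flatten s.

Definition aug (a : ZF) : int := \sum_(p <- a) p.1.
Definition inAugPow (n : nat) (a : ZF) : Prop :=
  exists s : seq (seq ZF),
    (forall l, l \in s -> size l = n /\ forall b, b \in l -> aug b = 0) /\
    eqZF a (sumZF [seq prodZF l | l <- s]).

(* Fox derivatives; on words via d(uv) = du + u dv (o(v) = 1), extended
   additively *)
Definition fox_letter (j : gen) (l : letter) : ZF :=
  if l.1 == j then (if l.2 then [:: (-1, [:: l])] else oneZF) else zeroZF.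
Fixpoint foxw (j : gen) (w : word) : ZF :=
  match w with
  | [::] => zeroZF
  | l :: w' => addZF (fox_letter j l) (mulZF (elt [:: l]) (foxw j w'))
  end.
Definition fox (j : gen) (a : ZF) : ZF :=
  sumZF [seq scaleZF p.1 (foxw j p.2) | p <- a].

Definition mx2 := gen -> gen -> ZF.
Definition mx2_one : mx2 := fun i j => if i == j then oneZF else zeroZF.
Definition mx2_mul (A B : mx2) : mx2 :=
  fun i k => addZF (mulZF (A i gx) (B gx k)) (mulZF (A i gy) (B gy k)).
Definition mx2_sub (A B : mx2) : mx2 := fun i j => subZF (A i j) (B i j).
Definition mx2_trace (A : mx2) : ZF := addZF (A gx gx) (A gy gy).
Definition mx2_invertible (A : mx2) : Prop :=
  exists K : mx2, forall i j,
    eqZF (mx2_mul A K i j) (mx2_one i j) /\ eqZF (mx2_mul K A i j) (mx2_one i j).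

Definition jacobian (f : gen -> word) : mx2 := fun i j => fox j (elt (f i)).

(* tau : x -> 1+X, y -> 1+Y, into Z<<X,Y>>; coefficient of a monomial m
   (a sequence of generators) in tau(a). x^-1 -> sum_k (-X)^k. *)
Definition tau_letter (l : letter) (b : seq gen) : int :=
  if all (fun g => g == l.1) b then
    (if l.2 then (-1) ^+ size b else (if (size b <= 1)%N then 1 else 0))
  else 0.
Fixpoint tauw (w : word) (m : seq gen) : int :=
  match w with
  | [::] => if m is [::] then 1 else 0
  | l :: w' => \sum_(k < (size m).+1) tau_letter l (take k m) * tauw w' (drop k m)
  end.
Definition tau_coef (a : ZF) (m : seq gen) : int := \sum_(p <- a) p.1 * tauw p.2 m.

(* R_4^+ = R_4 (1 - gamma), (Z1Z2Z3Z4)^gamma = Z2Z3Z4Z1 = rot 1 [Z1;..;Z4];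
   a degree-4 element q lies in R_4^+ iff q = p - p^gamma for some p in R_4,
   i.e. q_m = p_m - p_(rotr 1 m) for all monomials m of degree 4. *)
Definition inR4plus (q : seq gen -> int) : Prop :=
  exists p : seq gen -> int, forall m, size m = 4%N -> q m = p m - p (rotr 1 m).

Definition c13 : word := comm (comm wx wy) (comm (comm wx wy) wy).
Definition phi13 (g : gen) : word := if g == gx then wx ++ c13 else wy.

From HB Require Import structures.
From mathcomp Require Import all_boot all_order all_algebra.
Import Order.TTheory GRing.Theory Num.Theory.
Local Open Scope ring_scope.
Set Implicit Arguments. Unset Strict Implicit. Unset Printing Implicit Defensive.

(* - c lies in F_5 because [F_n, F_2] <= F_(n+2): for b in F_n the map
     g |-> [b,g] is a homomorphism from F to the abelian group F_(n+1)/F_(n+2),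
     so it kills commutators.  Hence phi is the identity modulo F_5.
   - phi is not onto: in the permutation representation x |-> (2 3),
     y |-> (0 1 2) of F, the images xc and y both fix the point 3, which x
     moves.
   - J = D phi has second row (0, 1), and in the associated permutation module
     the function (1, -2, 1, 0) is annihilated by J_xx; so J has no inverse
     over ZF.
   - Memberships in powers of the augmentation ideal are certified by explicit
     decompositions of dc/dx and dc/dy (multiplied by x or x - 1 as needed),
     checked by computation; the degree-4 part of tau(tr(J - 1)) evaluates to
     2 XYYY - 3 YXYY + YYXY = p - p^gamma with p = YYXY - 2 YXYY. *)

Lemma linvK (l : letter) : linv (linv l) = l.
Proof. by case: l => g e; rewrite /linv /= negbK. Qed.

Lemma winv_cons l w : winv (l :: w) = winv w ++ [:: linv l].
Proof. by rewrite /winv map_cons rev_cons cats1. Qed.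

Lemma winv_cat u v : winv (u ++ v) = winv v ++ winv u.
Proof. by rewrite /winv map_cat rev_cat. Qed.

Lemma winvK w : winv (winv w) = w.
Proof.
by rewrite /winv map_rev revK -map_comp map_id_in // => l _ /=; rewrite linvK.
Qed.

Lemma winv_comm u v : winv (comm u v) = comm v u.
Proof. by rewrite /comm !winv_cat !winvK -!catA. Qed.

Fixpoint reduced (s : word) : bool :=
  if s is a :: ((b :: _) as s') then (b != linv a) && reduced s' else true.

Lemma reduced_behead l s : reduced (l :: s) -> reduced s.
Proof. by case: s => //= b s /andP[]. Qed.

Lemma reduced_push l s : reduced s -> reduced (push l s).
Proof.
case: s => [|l' s] //= Hs; case: ifP => [_|/negbT Hl']; first exact: reduced_behead Hs.
by rewrite /= Hl' Hs.
Qed.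

Lemma reduced_reduce w : reduced (reduce w).
Proof. by elim: w => //= l w IH; exact: reduced_push. Qed.

Lemma push_linvK l t : reduced t -> push l (push (linv l) t) = t.
Proof.
case: t => [|l0 t] /=; first by rewrite eqxx.
rewrite linvK; case: eqP => [-> Ht|_ _]; last by rewrite /= eqxx.
by case: t Ht => [|l1 t] //= /andP[/negbTE ->].
Qed.

Lemma reduce_id s : reduced s -> reduce s = s.
Proof.
elim: s => //= l s IH Hs; rewrite IH ?(reduced_behead Hs) //.
by case: s Hs {IH} => //= b s /andP[/negbTE ->].
Qed.

Lemma reduceK w : reduce (reduce w) = reduce w.
Proof. exact/reduce_id/reduced_reduce. Qed.

Lemma eqF_catl w u v : eqF u v -> eqF (w ++ u) (w ++ v).
Proof. by rewrite /eqF /reduce !foldr_cat => ->. Qed.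

Lemma reduce_cancel w v : reduce (w ++ winv w ++ v) = reduce v.
Proof.
elim: w v => //= l w IH v; rewrite winv_cons -catA /= IH /=.
exact/push_linvK/reduced_reduce.
Qed.

Lemma reduce_cancel' w v : reduce (winv w ++ w ++ v) = reduce v.
Proof. by have := reduce_cancel (winv w) v; rewrite winvK. Qed.

Lemma eqF_cancel u w v : eqF (u ++ w ++ winv w ++ v) (u ++ v).
Proof. exact/eqF_catl/reduce_cancel. Qed.

Lemma eqF_cancel' u w v : eqF (u ++ winv w ++ w ++ v) (u ++ v).
Proof. exact/eqF_catl/reduce_cancel'. Qed.


Lemma lcs_mono m w : lcs m w -> forall k, (1 <= k <= m)%N -> lcs k w.
Proof.
elim=> {m w}.
- by move=> w [|[|k]] // _; exact: lcs_one.
- move=> n u v _ IH [|[|k]] // /andP[_ Hk]; first exact: lcs_one.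
  by apply: lcs_comm; apply: IH.
- by move=> n k _; exact: lcs_nil.
- by move=> n u v _ IHu _ IHv k Hk; apply: lcs_mul; [exact: IHu | exact: IHv].
- by move=> n u _ IH k Hk; apply: lcs_inv; exact: IH.
- by move=> n u v Euv _ IH k Hk; apply: lcs_eqF Euv _; exact: IH.
Qed.

Definition conj (w g : word) : word := winv g ++ w ++ g.

(* Each F_n (n >= 1) is normal: w^g = w [w,g]. *)
Lemma lcs_conj n w g : (1 <= n)%N -> lcs n w -> lcs n (conj w g).
Proof.
move=> Hn Hw; have Hwg : lcs n (comm w g).
  by apply: (lcs_mono (lcs_comm g Hw)); rewrite Hn leqnSn.
by apply: (lcs_eqF _ (lcs_mul Hw Hwg)); exact: reduce_cancel.
Qed.

Definition congF (k : nat) (u v : word) : Prop := lcs k (winv u ++ v).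

Section CongruenceModLcs.
Variable k : nat.
Hypothesis k_gt0 : (0 < k)%N.

Lemma congF_eqF u v : eqF u v -> congF k u v.
Proof.
move=> Euv; apply: (lcs_eqF _ (lcs_nil k)).
by rewrite /eqF -(eqF_catl (winv u) Euv) -[winv u ++ u]cats0 -catA reduce_cancel'.
Qed.

Lemma congF_sym u v : congF k u v -> congF k v u.
Proof. by move/lcs_inv; rewrite /congF winv_cat winvK. Qed.

Lemma congF_trans u v w : congF k u v -> congF k v w -> congF k u w.
Proof.
move=> Huv Hvw; apply: (lcs_eqF _ (lcs_mul Huv Hvw)).
by rewrite -catA; exact: eqF_cancel.
Qed.

Lemma congF_catl w u v : congF k u v -> congF k (w ++ u) (w ++ v).
Proof.
move=> Huv; apply: (lcs_eqF _ Huv); rewrite winv_cat -catA.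
exact/esym/eqF_cancel'.
Qed.

Lemma congF_catr w u v : congF k u v -> congF k (u ++ w) (v ++ w).
Proof. by move/(lcs_conj w k_gt0); rewrite /congF winv_cat /conj -!catA. Qed.

Lemma congF_cat u u' v v' :
  congF k u u' -> congF k v v' -> congF k (u ++ v) (u' ++ v').
Proof.
by move=> Hu Hv; apply: congF_trans (congF_catr v Hu) (congF_catl u' Hv).
Qed.

Lemma congF_winv u v : congF k u v -> congF k (winv u) (winv v).
Proof.
move=> Huv; have := congF_catr (winv v) (congF_catl (winv u) Huv).
rewrite -!catA => H; apply: congF_sym; apply: congF_trans (congF_trans _ H) _.
- by apply/congF_eqF/esym; exact: reduce_cancel'.
- by apply: congF_eqF; have := eqF_cancel (winv u) v [::]; rewrite !cats0.
Qed.

End CongruenceModLcs.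

Lemma congF_central k c w : lcs k c -> congF k.+1 (c ++ w) (w ++ c).
Proof.
move/(lcs_comm w)/lcs_inv; rewrite winv_comm.
by rewrite /congF winv_cat /comm -!catA.
Qed.

Lemma congF_conj k c h : lcs k c -> congF k.+1 (conj c h) c.
Proof.
move/(congF_central h)/(congF_catl (winv h)) => H.
apply: congF_trans H _.
apply: congF_eqF; exact: reduce_cancel'.
Qed.

(* For b in F_n, the map g |-> [b,g] is a homomorphism from F to the abelian
   group F_(n+1)/F_(n+2); hence it kills commutators, i.e. [F_n, F_2] is
   contained in F_(n+2). *)
Section CommutatorMap.
Variables (n : nat) (b : word).
Hypothesis b_in : lcs n b.

Let comm_b_in g : lcs n.+1 (comm b g).
Proof. exact: lcs_comm. Qed.

Lemma comm_catr g h : congF n.+2 (comm b (g ++ h)) (comm b g ++ comm b h).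
Proof.
have E : eqF (comm b (g ++ h)) (comm b h ++ conj (comm b g) h).
  rewrite /comm /conj winv_cat -!catA; do 2 apply: eqF_catl.
  by rewrite /eqF (eqF_cancel b) reduce_cancel.
apply: congF_trans (congF_eqF _ E) _.
apply: congF_trans (congF_central _ (comm_b_in h)).
exact/congF_catl/congF_conj.
Qed.

Lemma comm_winvr g : congF n.+2 (comm b (winv g)) (winv (comm b g)).
Proof.
set X := comm b (winv g); set Y := comm b g.
have XY1 : congF n.+2 (X ++ Y) [::].
  apply: congF_trans (congF_sym (comm_catr _ _)) (congF_eqF _ _).
  rewrite /eqF /comm winv_cat winvK -!catA (eqF_cancel' (winv b)).
  by rewrite reduce_cancel' -[winv g ++ g]cats0 -catA reduce_cancel'.
have := congF_catr (ltn0Sn _) (winv Y) XY1; rewrite -catA.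
apply: congF_trans; apply: congF_eqF.
by have := eqF_cancel X Y [::]; rewrite !cats0 /eqF => ->.
Qed.

Lemma lcs_comm_comm u v : lcs n.+2 (comm b (comm u v)).
Proof.
have Hlin : congF n.+2 (comm b (comm u v))
    (comm (comm b u) (comm b v)).
  rewrite {1}/comm.
  apply: congF_trans (comm_catr _ _) _; apply: (congF_cat (ltn0Sn _) (comm_winvr u)).
  apply: congF_trans (comm_catr _ _) _; apply: (congF_cat (ltn0Sn _) (comm_winvr v)).
  exact: comm_catr.
have Hcomm : congF n.+2 [::] (comm (comm b u) (comm b v)).
  exact: lcs_comm (comm_b_in u).
exact: congF_trans Hcomm (congF_sym Hlin).
Qed.

End CommutatorMap.

Lemma ext_congF k f w :
  (0 < k)%N -> (forall g, congF k [:: (g, false)] (f g)) -> congF k w (ext f w).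
Proof.
move=> k_gt0 Hf; elim: w => [|[g e] w IH]; first exact: congF_eqF.
rewrite /ext map_cons /= -/(ext f w) -[(g, e) :: w]cat1s.
apply: (congF_cat k_gt0) IH; case: e; last exact: Hf.
exact: (congF_winv k_gt0 (Hf g)).
Qed.

(* c = [[x,y],[[x,y],y]] lies in F_5, being the inverse of [[[x,y],y],[x,y]]
   with [[x,y],y] in F_3. *)
Lemma c13_in_F5 : lcs 5 c13.
Proof.
have F2 : lcs 2 (comm wx wy) by exact/lcs_comm/lcs_one.
have := lcs_inv (lcs_comm_comm (lcs_comm wy F2) wx wy).
by rewrite winv_comm.
Qed.

Lemma phi13_congF5 w : congF 5 w (ext phi13 w).
Proof.
apply: ext_congF => // -[]; first exact: congF_eqF.
apply: (lcs_eqF _ c13_in_F5); exact/esym/reduce_cancel'.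
Qed.

(* A choice of mutually inverse maps for the letters defines a left action of
   F on a set T; (phi . a)(t) = sum_i z_i phi(w_i t) then makes the functions
   T -> Z a right ZF-module. *)
Section WordAction.
Variables (T : Type) (act_letter : letter -> T -> T).
Hypothesis act_letterK : forall l, cancel (act_letter (linv l)) (act_letter l).

Definition wact (w : word) (t : T) : T := foldr act_letter t w.

Lemma wact_cat u v t : wact (u ++ v) t = wact u (wact v t).
Proof. by rewrite /wact foldr_cat. Qed.

Lemma wact_reduce w t : wact (reduce w) t = wact w t.
Proof.
elim: w t => //= l w IH t; rewrite -IH.
case: (reduce w) => [|l' s] //=; case: eqP => [->|_] //=.
by rewrite act_letterK.
Qed.

Lemma wact_eqF u v t : eqF u v -> wact u t = wact v t.
Proof. by move=> Euv; rewrite -wact_reduce Euv wact_reduce. Qed.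

Lemma wact_winvK w t : wact w (wact (winv w) t) = t.
Proof.
elim: w t => //= l w IH t.
by rewrite winv_cons wact_cat /= [wact w _]IH act_letterK.
Qed.

Lemma wact_Kwinv w t : wact (winv w) (wact w t) = t.
Proof. by have := wact_winvK (winv w) t; rewrite winvK. Qed.

Lemma not_isAut_of_stab f t v :
  (forall g, wact (f g) t = t) -> wact v t <> t -> ~ isAut f.
Proof.
move=> fix_f moved [_ /(_ v) [u Hu]]; apply: moved.
rewrite -(wact_eqF _ Hu); elim: u {Hu} => //= -[g e] u IH.
rewrite wact_cat IH; case: e => /=; last exact: fix_f.
by rewrite -{1}(fix_f g) wact_Kwinv.
Qed.

Definition ract (phi : T -> int) (a : ZF) (t : T) : int :=
  \sum_(p <- a) p.1 * phi (wact p.2 t).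

Lemma ract_cat phi a b t : ract phi (a ++ b) t = ract phi a t + ract phi b t.
Proof. by rewrite /ract big_cat. Qed.

Lemma ract_eq phi psi a t : phi =1 psi -> ract phi a t = ract psi a t.
Proof. by move=> E; apply: eq_bigr => p _; rewrite E. Qed.

Lemma ract0 phi a t : phi =1 (fun=> 0) -> ract phi a t = 0.
Proof. by move=> E; apply: big1 => p _; rewrite E mulr0. Qed.

Lemma ract_one phi t : ract phi oneZF t = phi t.
Proof. by rewrite /ract big_seq1 mul1r. Qed.

Lemma ract_mul phi a b t : ract phi (mulZF a b) t = ract (ract phi a) b t.
Proof.
elim: a t => [|p a IH] t.
  by rewrite {1}/ract big_nil ract0 // => t'; rewrite /ract big_nil.
rewrite /mulZF /= ract_cat -/(mulZF a b) IH /ract big_map -big_split /=.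
apply: eq_bigr => q _; rewrite big_cons wact_cat mulrDr mulrA [p.1 * _]mulrC.
by rewrite -mulrA.
Qed.

Lemma ract_regroup phi a t (S : seq word) :
  uniq S -> (forall p, p \in a -> reduce p.2 \in S) ->
  (forall r, r \in S -> reduce r = r) ->
  ract phi a t = \sum_(r <- S) coef a r * phi (wact r t).
Proof.
move=> uniqS aS redS; rewrite /coef.
under eq_big_seq => r Sr do rewrite (redS r Sr) mulr_suml big_mkcond.
rewrite exchange_big /=; apply: eq_big_seq => p ap.
rewrite (bigD1_seq (reduce p.2)) ?aS //= eqxx wact_reduce.
by rewrite big1_seq ?addr0 // => r /andP[/negbTE]; rewrite eq_sym => ->.
Qed.

Lemma ract_eqZF phi a b t : eqZF a b -> ract phi a t = ract phi b t.
Proof.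
move=> Eab; set S := undup [seq reduce p.2 | p <- a ++ b].
have redS r : r \in S -> reduce r = r.
  by rewrite mem_undup => /mapP[p _ ->]; exact: reduceK.
have inS p : p \in a ++ b -> reduce p.2 \in S.
  by move=> abp; rewrite mem_undup; apply: map_f.
rewrite !(@ract_regroup phi _ t S) ?undup_uniq // => [|p bp|p ap]; last 2 first.
- by apply: inS; rewrite mem_cat bp orbT.
- by apply: inS; rewrite mem_cat ap.
by apply: eq_bigr => r _; rewrite Eab.
Qed.

Lemma mx2_not_invertible (A : mx2) phi t :
  eqZF (A gy gx) zeroZF -> eqZF (A gy gy) oneZF ->
  (forall s, ract phi (A gx gx) s = 0) -> phi t <> 0 -> ~ mx2_invertible A.
Proof.
move=> Ayx Ayy Axx phi_t [K HK].
have ract_zero psi s : ract psi zeroZF s = 0 by rewrite /ract big_nil.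
have Kyx psi s : ract psi (K gy gx) s = 0.
  (* the (y,x) entry of A K = 1 reads 0 K_xx + 1 K_yx = 0 *)
  have := ract_eqZF psi s (proj1 (HK gy gx)).
  rewrite /mx2_mul /= ract_zero ract_cat !ract_mul [X in X + _]ract0 => [|s'].
    by rewrite add0r (ract_eq _ _ (fun s' => ract_eqZF psi s' Ayy)) (ract_eq _ _ (ract_one psi)).
  by rewrite (ract_eqZF _ _ Ayx) ract_zero.
apply: phi_t; rewrite -ract_one -(ract_eqZF _ _ (proj1 (HK gx gx))).
by rewrite /mx2_mul ract_cat !ract_mul Kyx addr0 ract0.
Qed.

End WordAction.

(* The permutation representation F -> S_4 (on the points 0..3, all larger
   points being fixed) sending x to (2 3) and y to (0 1 2). *)
Definition act4 (l : letter) (q : nat) : nat :=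
  match l with
  | (false, _) => nth q [:: 0; 1; 3; 2]%N q
  | (true, false) => nth q [:: 1; 2; 0; 3]%N q
  | (true, true) => nth q [:: 2; 0; 1; 3]%N q
  end.

Lemma act4K l : cancel (act4 (linv l)) (act4 l).
Proof.
move=> q; case: l => [[|] [|]];
by do 4 (case: q => [|q]; first by []); rewrite /act4 !nth_default.
Qed.

Lemma act4_big w q : (4 <= q)%N -> wact act4 w q = q.
Proof.
move=> q_ge4; elim: w => //= l w ->.
by case: l => [[|] [|]]; rewrite /act4 nth_default.
Qed.

(* phi(x) = xc and phi(y) = y fix the point 3, which x moves: x is not in the
   image of phi. *)
Lemma phi13_not_aut : ~ isAut phi13.
Proof. by apply: (not_isAut_of_stab act4K (f := phi13) (t := 3%N) (v := wx)) => // -[]. Qed.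

(* The function (1, -2, 1, 0) on the points is annihilated by the (x,x) entry
   1 + x dc/dx of the Jacobian. *)
Definition phi_ker (q : nat) : int := nth 0 [:: 1; -2; 1; 0] q.

Lemma jacobian_xx_annihilates q : ract act4 phi_ker (jacobian phi13 gx gx) q = 0.
Proof.
case: (ltnP q 4) => [q_lt4|q_ge4].
  by rewrite /ract unlock; do 4 (case: q q_lt4 => [|q] q_lt4; first by vm_compute).
rewrite /ract big1 // => p _.
by rewrite act4_big // /phi_ker nth_default ?mulr0.
Qed.

Lemma jacobian13_not_invertible : ~ mx2_invertible (jacobian phi13).
Proof.
by apply: (mx2_not_invertible act4K (t := 0%N) _ _ jacobian_xx_annihilates).
Qed.

(* Membership in a power of the augmentation ideal is certified by an explicit
   decomposition as a sum of products of augmentation-zero elements; the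
   boolean checker below verifies such a certificate, comparing the two sides
   coefficientwise on the finitely many elements of F that occur. *)
Definition eqZFb (a b : ZF) : bool :=
  all (fun r => coef a r == coef b r) (undup [seq reduce p.2 | p <- a ++ b]).

Lemma coef_reduce a g : coef a (reduce g) = coef a g.
Proof. by rewrite /coef reduceK. Qed.

Lemma eqZFb_sound a b : eqZFb a b -> eqZF a b.
Proof.
move=> /allP Hab g; rewrite -[coef a g]coef_reduce -[coef b g]coef_reduce.
case: (boolP (reduce g \in undup [seq reduce p.2 | p <- a ++ b])) => [/Hab/eqP //|].
rewrite mem_undup => g_out.
have coef0 c : {subset c <= a ++ b} -> coef c (reduce g) = 0.
  move=> cab; apply: big1_seq => p /andP[/eqP Epg /cab ab_p].
  by case/negP: g_out; rewrite -[reduce g]reduceK -Epg; apply: map_f.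
by rewrite !coef0 // => p cp; rewrite mem_cat cp ?orbT.
Qed.

Definition augPowb (n : nat) (a : ZF) (s : seq (seq ZF)) : bool :=
  all (fun l => (size l == n) && all (fun b => aug b == 0) l) s &&
  eqZFb a (sumZF [seq prodZF l | l <- s]).

Lemma augPowb_sound n a s : augPowb n a s -> inAugPow n a.
Proof.
case/andP=> /allP Hs /eqZFb_sound Ea; exists s; split=> // l /Hs /andP[/eqP -> /allP Hl].
by split=> // b /Hl /eqP.
Qed.

Ltac certify s :=
  apply: (@augPowb_sound _ _ s); rewrite /augPowb /eqZFb /coef /aug unlock; vm_compute.

Definition dgen (g : gen) : ZF := [:: (1, [:: (g, false)]); (-1, [::])].

Definition c13_prefixes (s : seq (int * nat)) : ZF :=
  [seq (p.1, take p.2 (reduce c13)) | p <- s].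

(* A certificate entry (s, [:: g1; ...; gk]) stands for the product
   (c13_prefixes s) (g1 - 1) ... (gk - 1). *)
Definition certificate (s : seq (seq (int * nat) * seq gen)) : seq (seq ZF) :=
  [seq c13_prefixes e.1 :: map dgen e.2 | e <- s].

(* Decompositions of the Fox derivatives dc/dx and dc/dy in varpi^4; as Fox
   calculus predicts, only prefixes of c occur in the first factors. *)
Definition fox_c13_x_cert : seq (seq (int * nat) * seq gen) :=
  [:: ([:: (1, 3); (-1, 7); (2, 8); (-2, 11)], [:: gx; gx; gy]);
      ([:: (-1, 5); (-1, 6); (2, 9)], [:: gy; gx; gy]);
      ([:: (1, 3); (1, 7); (1, 8); (-3, 11)], [:: gx; gy; gy]);
      ([:: (1, 2); (-1, 5); (1, 7); (3, 9); (-3, 12); (-1, 13)], [:: gy; gy; gy])].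

Definition fox_c13_y_cert : seq (seq (int * nat) * seq gen) :=
  [:: ([:: (-1, 3); (1, 7); (-2, 8); (2, 11)], [:: gx; gx; gx]);
      ([:: (1, 5); (1, 6); (-2, 9)], [:: gy; gx; gx]);
      ([:: (-1, 3); (-1, 7); (-2, 8); (4, 11)], [:: gx; gy; gx]);
      ([:: (-1, 2); (1, 5); (-2, 7); (-4, 9); (4, 12); (2, 13)], [:: gy; gy; gx]);
      ([:: (1, 8); (-1, 11)], [:: gx; gx; gy]);
      ([:: (1, 7); (1, 9); (-1, 12); (-1, 13)], [:: gy; gx; gy])].

Lemma fox_c13_x_augPow : inAugPow 4 (fox gx (elt c13)).
Proof. by certify (certificate fox_c13_x_cert). Qed.

(* Since phi(x) = xc and phi(y) = y, J - 1 has entries x dc/dx, x dc/dy in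
   its first row and vanishes in its second row; certificates for the first row
   are obtained by multiplying the first factors of those of dc/dx and dc/dy
   by x. *)
Definition lmul_certificate (w : word) (s : seq (seq ZF)) : seq (seq ZF) :=
  [seq mulZF (elt w) (head zeroZF l) :: behead l | l <- s].

Lemma jacobian13_sub1_augPow i j :
  inAugPow 4 (mx2_sub (jacobian phi13) mx2_one i j).
Proof.
case: i; case: j.
- by certify ([::] : seq (seq ZF)).
- by certify ([::] : seq (seq ZF)).
- by certify (lmul_certificate wx (certificate fox_c13_y_cert)).
- by certify (lmul_certificate wx (certificate fox_c13_x_cert)).
Qed.

(* tr(J - 1) = x dc/dx, so tr(J - 1) - dc/dx = (x - 1) dc/dx. *)
Lemma trace_sub_fox_augPow :
  inAugPow 5 (subZF (mx2_trace (mx2_sub (jacobian phi13) mx2_one)) (fox gx (elt c13))).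
Proof. by certify [seq dgen gx :: l | l <- certificate fox_c13_x_cert]. Qed.

(* tau unfolded into iterated folds, so that it can be evaluated. *)
Fixpoint tauw_foldr (w : word) (m : seq gen) : int :=
  if w is l :: w' then
    foldr (fun k acc => tau_letter l (take k m) * tauw_foldr w' (drop k m) + acc)
      0 (iota 0 (size m).+1)
  else if m is [::] then 1 else 0.

Lemma tauwE w m : tauw w m = tauw_foldr w m.
Proof.
elim: w m => [//|l w IH] m; rewrite [LHS]/= -(big_mkord xpredT
  (fun k => tau_letter l (take k m) * tauw w (drop k m))) /index_iota subn0.
have -> : tauw_foldr (l :: w) m = foldr (fun k acc =>
    tau_letter l (take k m) * tauw_foldr w (drop k m) + acc) 0 (iota 0 (size m).+1).
  by [].
by elim: (iota 0 _) => [|k s IHs]; rewrite ?big_nil // big_cons IHs IH.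
Qed.

Lemma tau_coefE a m :
  tau_coef a m = foldr (fun p acc => p.1 * tauw_foldr p.2 m + acc) 0 a.
Proof.
by rewrite /tau_coef; elim: a => [|p a IH]; rewrite ?big_nil ?big_cons //= IH tauwE.
Qed.

Definition tau4_trace13 (m : seq gen) : int :=
  if m == [:: gx; gy; gy; gy] then 2
  else if m == [:: gy; gx; gy; gy] then -3
  else if m == [:: gy; gy; gx; gy] then 1 else 0.

Lemma tau_trace13_degree4 m : size m = 4%N ->
  tau_coef (mx2_trace (mx2_sub (jacobian phi13) mx2_one)) m = tau4_trace13 m.
Proof.
case: m => [|a [|b [|c [|d [|e m]]]]] //= _; rewrite tau_coefE.
by case: a; case: b; case: c; case: d; vm_compute.
Qed.

Lemma tau4_trace13_R4plus : inR4plus tau4_trace13.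
Proof.
exists (fun m => if m == [:: gy; gy; gx; gy] then 1
                 else if m == [:: gy; gx; gy; gy] then -2 else 0).
by case=> [|a [|b [|c [|d [|e m]]]]] //= _; case: a; case: b; case: c; case: d.
Qed.

Lemma inR4plus_deg4 q q' :
  (forall m, size m = 4%N -> q m = q' m) -> inR4plus q' -> inR4plus q.
Proof. by move=> Eq [p Hp]; exists p => m m4; rewrite Eq // Hp. Qed.

Theorem mainTheorem13 :
  let J := jacobian phi13 in
  let t := mx2_trace (mx2_sub J mx2_one) in
  (* c in F_5, and phi acts trivially on F/F_5 (the B_4 condition) *)
  lcs 5 c13 /\
  (forall w, lcs 5 (winv w ++ ext phi13 w)) /\
  (* phi is not an automorphism of F *)
  ~ isAut phi13 /\
  (* J - 1 in M_2(varpi^4) *)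
  (forall i j, inAugPow 4 (mx2_sub J mx2_one i j)) /\
  (* tr(J - 1) = d c / d x  mod varpi^5, and lies in varpi^4 *)
  inAugPow 5 (subZF t (fox gx (elt c13))) /\
  inAugPow 4 (fox gx (elt c13)) /\
  (* tau(tr(J - 1)) mod degree 5 lies in R_4^+ *)
  inR4plus (tau_coef t) /\
  (* yet J is not invertible over ZF *)
  ~ mx2_invertible J.
Proof.
move=> J t.
split; first exact: c13_in_F5.
split; first exact: phi13_congF5.
split; first exact: phi13_not_aut.
split; first exact: jacobian13_sub1_augPow.
split; first exact: trace_sub_fox_augPow.
split; first exact: fox_c13_x_augPow.
split; last exact: jacobian13_not_invertible.
exact: inR4plus_deg4 tau_trace13_degree4 tau4_trace13_R4plus.
Qed.
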